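(* Let $f,g:[a,b]\to\mathbb{R}$, $a<b$, be convex functions such that $f$, $g$, $fg$ are integrable on $[a,b]$. Then \begin{align*} &\frac{g(b)}{(b-a)^2}\int_a^b (x-a)f(x)\,dx+\frac{g(a)}{(b-a)^2}\int_a^b (b-x)f(x)\,dx+\frac{f(b)}{(b-a)^2}\int_a^b (x-a)g(x)\,dx+\frac{f(a)}{(b-a)^2}\int_a^b (b-x)g(x)\,dx\\ &\le \frac{1}{b-a}\int_a^b f(x)g(x)\,dx+\frac13 M(a,b)+\frac16 N(a,b), \end{align*} where $M(a,b)=f(a)g(a)+f(b)g(b)$ and $N(a,b)=f(a)g(b)+f(b)g(a)$. *)

From Stdlib Require Import Reals.
Open Scope R_scope.

Definition convex_on (a b : R) (f : R -> R) : Prop :=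
  forall x y t, a <= x <= b -> a <= y <= b -> 0 <= t <= 1 ->
    f (t * x + (1 - t) * y) <= t * f x + (1 - t) * f y.

From Stdlib Require Import Reals Lra.
From Coquelicot Require Import Coquelicot.
Open Scope R_scope.

(* Write c = b - a and let [secant a b u v x = u (b - x) + v (x - a)],
   which is c times the secant line through (a, u) and (b, v).  Convexity says
   exactly that c f(x) <= secant a b f(a) f(b) x on [a, b], and likewise for g.
   Multiplying the two nonnegative gaps gives the pointwise inequality
     c (f(x) S_g(x) + g(x) S_f(x)) <= c^2 f(x) g(x) + S_f(x) S_g(x),
   where S_f, S_g are the secants of f and g.  The left side integrates to
   c times the combination of the four weighted integrals of the statement, and
   the product of two secants is a quadratic polynomial whose integral is
   c^3 (M(a,b)/3 + N(a,b)/6).  Integrating and dividing by c^3 gives the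
   corollary. *)

Definition secant (a b u v x : R) : R := u * (b - x) + v * (x - a).

Lemma convex_below_secant (a b : R) (f : R -> R) (x : R) :
  a < b -> convex_on a b f -> a <= x <= b ->
  (b - a) * f x <= secant a b (f a) (f b) x.
Proof.
  intros hab hf hx.
  set (t := (b - x) / (b - a)).
  assert (ht : 0 <= t <= 1).
  { assert (h1t : 1 - t = (x - a) / (b - a)) by (unfold t; field; lra).
    assert (0 <= t) by (apply Rdiv_le_0_compat; lra).
    assert (0 <= (x - a) / (b - a)) by (apply Rdiv_le_0_compat; lra).
    lra. }
  assert (hx_eq : t * a + (1 - t) * b = x) by (unfold t; field; lra).
  pose proof (hf a b t ltac:(lra) ltac:(lra) ht) as hconv.
  rewrite hx_eq in hconv.
  replace (secant a b (f a) (f b) x) with ((b - a) * (t * f a + (1 - t) * f b))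
    by (unfold secant, t; field; lra).
  apply Rmult_le_compat_l; lra.
Qed.

(* If c u <= p and c v <= q then c (u q + v p) <= c^2 u v + p q:
   this is the nonnegativity of (p - c u)(q - c v). *)
Lemma product_of_gaps (c u v p q : R) :
  c * u <= p -> c * v <= q -> c * (u * q + v * p) <= c ^ 2 * (u * v) + p * q.
Proof.
  intros hu hv.
  assert (hgap : 0 <= (p - c * u) * (q - c * v)) by (apply Rmult_le_pos; lra).
  nra.
Qed.

Lemma is_RInt_secant_product (a b p q r s : R) :
  is_RInt (fun x => secant a b p q x * secant a b r s x) a b
    ((b - a) ^ 3 * ((p * r + q * s) / 3 + (p * s + q * r) / 6)).
Proof.
  set (F := fun x => - p * r * (b - x) ^ 3 / 3 + q * s * (x - a) ^ 3 / 3
                     + (p * s + q * r) * ((b - a) * (x - a) ^ 2 / 2 - (x - a) ^ 3 / 3)).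
  replace ((b - a) ^ 3 * ((p * r + q * s) / 3 + (p * s + q * r) / 6))
    with (F b - F a) by (unfold F; field).
  apply (is_RInt_derive F).
  - intros x _. unfold F, secant. auto_derive; [exact I | field].
  - intros x _. apply (@ex_derive_continuous R_AbsRing R_NormedModule).
    unfold secant. auto_derive. exact I.
Qed.

Lemma is_RInt_mul_secant (a b u v A B : R) (h : R -> R) :
  is_RInt (fun x => (b - x) * h x) a b B ->
  is_RInt (fun x => (x - a) * h x) a b A ->
  is_RInt (fun x => h x * secant a b u v x) a b (u * B + v * A).
Proof.
  intros hB hA.
  apply (is_RInt_ext (fun x => plus (scal u ((b - x) * h x)) (scal v ((x - a) * h x)))).
  { intros x _. unfold secant, plus, scal; simpl; unfold mult; simpl; ring. }
  apply (@is_RInt_plus R_NormedModule); apply (@is_RInt_scal R_NormedModule); assumption.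
Qed.

Theorem corollary2 (a b : R) (f g : R -> R) (hab : a < b)
  (hf : convex_on a b f) (hg : convex_on a b g)
  (If : Riemann_integrable f a b) (Ig : Riemann_integrable g a b)
  (Ifg : Riemann_integrable (fun x => f x * g x) a b)
  (I1 : Riemann_integrable (fun x => (x - a) * f x) a b)
  (I2 : Riemann_integrable (fun x => (b - x) * f x) a b)
  (I3 : Riemann_integrable (fun x => (x - a) * g x) a b)
  (I4 : Riemann_integrable (fun x => (b - x) * g x) a b) :
  g b / (b - a) ^ 2 * RiemannInt I1 + g a / (b - a) ^ 2 * RiemannInt I2
  + f b / (b - a) ^ 2 * RiemannInt I3 + f a / (b - a) ^ 2 * RiemannInt I4
  <= 1 / (b - a) * RiemannInt Ifg
     + 1 / 3 * (f a * g a + f b * g b) + 1 / 6 * (f a * g b + f b * g a).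
Proof.
  set (c := b - a).
  set (Sf := secant a b (f a) (f b)). set (Sg := secant a b (g a) (g b)).
  assert (hL : is_RInt (fun x => c * (f x * Sg x + g x * Sf x)) a b
      (c * ((g a * RiemannInt I2 + g b * RiemannInt I1)
            + (f a * RiemannInt I4 + f b * RiemannInt I3)))).
  { apply (@is_RInt_scal R_NormedModule), (@is_RInt_plus R_NormedModule);
      apply is_RInt_mul_secant; apply ex_RInt_Reals_aux_1. }
  assert (hR : is_RInt (fun x => c ^ 2 * (f x * g x) + Sf x * Sg x) a b
      (c ^ 2 * RiemannInt Ifg + c ^ 3 * ((f a * g a + f b * g b) / 3
                                         + (f a * g b + f b * g a) / 6))).
  { apply (@is_RInt_plus R_NormedModule).
    - apply (@is_RInt_scal R_NormedModule), ex_RInt_Reals_aux_1.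
    - apply is_RInt_secant_product. }
  assert (hle := is_RInt_le _ _ a b _ _ (Rlt_le _ _ hab) hL hR
    (fun x hx => product_of_gaps c (f x) (g x) (Sf x) (Sg x)
       (convex_below_secant a b f x hab hf ltac:(lra))
       (convex_below_secant a b g x hab hg ltac:(lra)))).
  assert (hc3 : 0 < c ^ 3) by (apply pow_lt; unfold c; lra).
  apply Rmult_le_reg_l with (c ^ 3); [exact hc3|].
  replace (c ^ 3 * (g b / c ^ 2 * RiemannInt I1 + g a / c ^ 2 * RiemannInt I2
     + f b / c ^ 2 * RiemannInt I3 + f a / c ^ 2 * RiemannInt I4))
    with (c * ((g a * RiemannInt I2 + g b * RiemannInt I1)
               + (f a * RiemannInt I4 + f b * RiemannInt I3)))
    by (field; unfold c; lra).
  eapply Rle_trans; [exact hle|]. right. field. unfold c; lra.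
Qed.
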